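(* Let $a\in\mathbb{C}$ with $|a-\tfrac14|\le\tfrac14$, $a\neq0$, and $\varphi(z)=az^2+(1-2a)z+a$. Then: (i) if $|a-\tfrac14|<\tfrac14$, $\varphi$ is essentially linear fractional (with $\eta=\zeta=1$); (ii) if $|a-\tfrac14|=\tfrac14$ and $a\neq\tfrac12$, then $\varphi$ is not essentially linear fractional, but $\varphi\circ\varphi$ is essentially linear fractional; (iii) if $a=\tfrac12$, i.e. $\varphi(z)=\tfrac12z^2+\tfrac12$, then no iterate $\varphi_n$ ($n\ge1$) is essentially linear fractional.
   Context: An analytic self-map $\varphi$ of the open unit disk $\mathbb{D}$ is called essentially linear fractional if (1) $\varphi(\mathbb{D})$ is contained in a proper subdisk of $\mathbb{D}$ internally tangent to the unit circle at some point $\eta\in\partial\mathbb{D}$; (2) the set $\varphi^{-1}(\{\eta\}):=\{\gamma\in\partial\mathbb{D}:\eta \text{ belongs to the cluster set of } \varphi \text{ at } \gamma\}$ consists of exactly one point $\zeta\in\partial\mathbb{D}$; and (3) $\varphi'''$ extends continuously to $\mathbb{D}\cup\{\zeta\}$. (For $\varphi$ analytic on a neighborhood of $\overline{\mathbb{D}}$, the cluster-set condition in (2) just means $\varphi(\gamma)=\eta$.) $\varphi_n$ denotes the $n$-th iterate of $\varphi$. *)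

From Stdlib Require Import Reals.
From Coquelicot Require Import Coquelicot.
Open Scope R_scope.

Definition unit_disk (z : C) : Prop := Cmod z < 1.
Definition unit_circle (z : C) : Prop := Cmod z = 1.

Definition holomorphic_on_disk (f : C -> C) : Prop :=
  forall z, unit_disk z -> ex_derive f z.

Definition analytic_selfmap (phi : C -> C) : Prop :=
  holomorphic_on_disk phi /\ (forall z, unit_disk z -> unit_disk (phi z)).

(* phi(D) is contained in a proper subdisk of D internally tangent to the
   unit circle at eta; such a disk is {z : |z - (1-r) eta| < r} with 0<r<1 *)
Definition in_tangent_subdisk (phi : C -> C) (eta : C) : Prop :=
  exists r : R, 0 < r < 1 /\
    forall z, unit_disk z ->
      Cmod (Cminus (phi z) (Cmult (RtoC (1 - r)) eta)) < r.

Definition in_cluster_set (phi : C -> C) (gamma w : C) : Prop :=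
  forall eps : R, 0 < eps ->
    exists z, unit_disk z /\ Cmod (Cminus z gamma) < eps /\
              Cmod (Cminus (phi z) w) < eps.

(* phi''' (complex third derivative on D) extends continuously to D ∪ {zeta} *)
Definition third_deriv_extends (phi : C -> C) (zeta : C) : Prop :=
  exists f1 f2 f3 : C -> C,
    (forall z, unit_disk z -> is_derive phi z (f1 z)) /\
    (forall z, unit_disk z -> is_derive f1 z (f2 z)) /\
    (forall z, unit_disk z -> is_derive f2 z (f3 z)) /\
    exists L : C, forall eps : R, 0 < eps -> exists delta : R, 0 < delta /\
      forall z, unit_disk z -> Cmod (Cminus z zeta) < delta ->
        Cmod (Cminus (f3 z) L) < eps.

(* essentially linear fractional, with the tangency point eta and the
   unique boundary preimage zeta made explicit *)
Definition ELF_at (phi : C -> C) (eta zeta : C) : Prop :=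
  analytic_selfmap phi /\ unit_circle eta /\ unit_circle zeta /\
  in_tangent_subdisk phi eta /\
  (forall gamma, unit_circle gamma ->
     (in_cluster_set phi gamma eta <-> gamma = zeta)) /\
  third_deriv_extends phi zeta.

Definition essentially_linear_fractional (phi : C -> C) : Prop :=
  exists eta zeta : C, ELF_at phi eta zeta.

Definition quad_map (a : C) (z : C) : C :=
  Cplus (Cplus (Cmult a (Cmult z z)) (Cmult (Cminus (RtoC 1) (Cmult (RtoC 2) a)) z)) a.

Definition iterate (phi : C -> C) (n : nat) : C -> C := fun z => Nat.iter n phi z.

(** The variable [s = 1/(1 - z)] sends the unit disk onto
   [Re s > 1/2] and the disk of radius [r] tangent at [1] onto [Re s > 1/(2r)];
   it conjugates [phi] to [F(s) = s + a + a^2/(s - a)].  For [|a - 1/4| < 1/4]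
   one step of [F] raises [Re s] by a uniform [m > 0]; on the circle
   [|a - 1/4| = 1/4] one step only gives [Re F(s) >= Re s], but two steps gain
   a uniform [delta > 0] (section [TwoStepGain]).  This gives the tangent
   subdisks.  The boundary conditions follow from a Lipschitz argument: [f g]
   is the only cluster value of [f] at a boundary point [g], and lies in the
   closure of any disk containing [f(D)].  Thus the two boundary points [1] and
   [phi(-1) = 4a - 1] rule out case (ii) for [phi], and [phi(-1) = phi(1) = 1]
   rules out every iterate for [a = 1/2].  Third derivatives are affine. *)

From Pilot Require Import Defs.
From Stdlib Require Import Reals Lra Psatz Lia.
From Coquelicot Require Import Coquelicot.
Open Scope R_scope.

(** The squared modulus in coordinates, a polynomial that [nra] can handle. *)
Definition sqmod (z : C) : R := fst z ^ 2 + snd z ^ 2.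

Lemma sqmod_Cmod (z : C) : sqmod z = Cmod z ^ 2.
Proof. unfold Cmod, sqmod. rewrite pow2_sqrt; [reflexivity | nra]. Qed.

Lemma Cmod_lt_sqmod (z : C) (r : R) : 0 <= r -> (Cmod z < r <-> sqmod z < r ^ 2).
Proof. intros Hr. rewrite sqmod_Cmod. pose proof (Cmod_ge_0 z). split; intro; nra. Qed.

Lemma Cmod_le_sqmod (z : C) (r : R) : 0 <= r -> (Cmod z <= r <-> sqmod z <= r ^ 2).
Proof. intros Hr. rewrite sqmod_Cmod. pose proof (Cmod_ge_0 z). split; intro; nra. Qed.

Lemma Cmod_eq_sqmod (z : C) (r : R) : 0 <= r -> (Cmod z = r <-> sqmod z = r ^ 2).
Proof.
  intros Hr. rewrite sqmod_Cmod. pose proof (Cmod_ge_0 z).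
  split; intro Hz; [rewrite Hz; reflexivity | nra].
Qed.

Lemma Cmod_one : Cmod (RtoC 1) = 1.
Proof. rewrite Cmod_R, Rabs_pos_eq; lra. Qed.

Lemma Cmod_mone : Cmod (RtoC (-1)) = 1.
Proof. rewrite Cmod_R, Rabs_left; lra. Qed.

Lemma Cmod_sub_sym (x y : C) : Cmod (Cminus x y) = Cmod (Cminus y x).
Proof.
  replace (Cminus x y) with (Copp (Cminus y x)); [apply Cmod_opp|].
  apply injective_projections; simpl; ring.
Qed.

Lemma Cmod_sub_triangle (x y c : C) :
  Cmod (Cminus x c) <= Cmod (Cminus x y) + Cmod (Cminus y c).
Proof.
  replace (Cminus x c) with (Cplus (Cminus x y) (Cminus y c)); [apply Cmod_triangle|].
  apply injective_projections; simpl; ring.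
Qed.

Lemma Cmult_reg_r (x y : C) : Cmult x y = 0 -> y <> 0 -> x = 0.
Proof.
  intros H Hy. replace x with (Cmult (Cmult x y) (Cinv y)).
  - rewrite H. ring.
  - rewrite <- Cmult_assoc, Cinv_r by exact Hy. ring.
Qed.

(** ** The half-plane model of the disk

   [z] and [s] are related by [(1 - z) s = 1].  The disk of radius [r]
   internally tangent to the unit circle at [1] is [Re s > 1/(2r)]. *)

Lemma disk_to_halfplane (z : C) :
  unit_disk z -> exists s, Cmult (Cminus 1 z) s = 1 /\ fst s > 1/2.
Proof.
  unfold unit_disk. intro H. apply Cmod_lt_sqmod in H; [|lra].
  destruct z as [x y]. unfold sqmod in H; simpl in H.
  set (d := (1 - x) ^ 2 + y ^ 2).
  assert (Hd : 0 < d) by (unfold d; nra).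
  exists ((1 - x) / d, y / d). split.
  - unfold Cmult, Cminus, Cplus, Copp, RtoC; simpl.
    apply injective_projections; simpl; unfold d in *; field; lra.
  - simpl. apply Rmult_gt_reg_l with (2 * d); [lra|].
    replace (2 * d * ((1 - x) / d)) with (2 * (1 - x)) by (field; lra).
    unfold d. nra.
Qed.

Lemma halfplane_to_tangent_disk (w S : C) (r : R) :
  Cmult (Cminus 1 w) S = 1 -> 0 < r -> fst S > 1 / (2 * r) ->
  Cmod (Cminus w (Cmult (RtoC (1 - r)) (RtoC 1))) < r.
Proof.
  intros H Hr HS. apply Cmod_lt_sqmod; [lra|].
  destruct w as [w1 w2], S as [S1 S2].
  unfold sqmod, Cminus, Cplus, Copp, Cmult, RtoC in *; simpl in *.
  injection H as E1 E2.
  set (u1 := 1 + - w1) in *. set (u2 := 0 + - w2) in *.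
  assert (HS2 : 2 * r * S1 > 1).
  { apply Rmult_gt_compat_l with (r := 2 * r) in HS; [|lra].
    replace (2 * r * (1 / (2 * r))) with 1 in HS by (field; lra). lra. }
  set (N := S1 * S1 + S2 * S2).
  assert (HN : 0 < N) by (unfold N; nra).
  (* [u = 1 - w] is the inverse of [S]: [u N = conj S]. *)
  assert (U1 : u1 * N = S1).
  { transitivity (S1 * (u1 * S1 - u2 * S2) + S2 * (u1 * S2 + u2 * S1)).
    - unfold N; ring.
    - rewrite E1, E2; ring. }
  assert (U2 : u2 * N = - S2).
  { transitivity (- S2 * (u1 * S1 - u2 * S2) + S1 * (u1 * S2 + u2 * S1)).
    - unfold N; ring.
    - rewrite E1, E2; ring. }
  assert (UU : (u1 * u1 + u2 * u2) * N = 1).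
  { transitivity (u1 * (u1 * N) + u2 * (u2 * N)); [ring|]. rewrite U1, U2. lra. }
  assert (G : u1 * u1 + u2 * u2 < 2 * r * u1).
  { apply Rmult_lt_reg_r with N; [exact HN|]. rewrite UU.
    replace (2 * r * u1 * N) with (2 * r * S1) by (rewrite <- U1; ring). lra. }
  replace (w1 + - ((1 - r) * 1 - 0 * 0)) with (r - u1) by (unfold u1; ring).
  replace (w2 + - ((1 - r) * 0 + 0 * 1)) with (- u2) by (unfold u2; ring).
  nra.
Qed.

Lemma halfplane_to_disk (w S : C) :
  Cmult (Cminus 1 w) S = 1 -> fst S > 1/2 -> unit_disk w.
Proof.
  intros H HS. unfold unit_disk.
  pose proof (halfplane_to_tangent_disk w S 1 H ltac:(lra) ltac:(lra)) as M.
  replace (Cminus w (Cmult (RtoC (1 - 1)) (RtoC 1))) with w in M; [exact M|].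
  apply injective_projections; cbn; ring.
Qed.

(** A uniform margin [m] beyond the half-plane [Re s > 1/2] yields a
    tangent subdisk at [1], of radius [1/(1 + m)]. *)
Lemma tangent_subdisk_of_margin (f : C -> C) (m : R) : 0 < m ->
  (forall z, unit_disk z ->
     exists S, Cmult (Cminus 1 (f z)) S = 1 /\ fst S >= 1/2 + m) ->
  in_tangent_subdisk f (RtoC 1).
Proof.
  intros Hm H. exists (1 / (1 + m)). split.
  - split; [apply Rdiv_lt_0_compat; lra|].
    apply Rmult_lt_reg_r with (1 + m); [lra|].
    replace (1 / (1 + m) * (1 + m)) with 1 by (field; lra). lra.
  - intros z Hz. destruct (H z Hz) as [S [HS1 HS2]].
    apply (halfplane_to_tangent_disk _ S); [exact HS1 | apply Rdiv_lt_0_compat; lra |].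
    replace (1 / (2 * (1 / (1 + m)))) with ((1 + m) / 2) by (field; lra). lra.
Qed.

(** ** The conjugated map [F(s) = s + a + a^2/(s - a)]

   Throughout, [a = (p, q)].  [dsq p q s = |s - a|^2], and [Fa p q s] is
   [F(s)] written in coordinates, so that real parts can be estimated. *)

Definition dsq (p q : R) (s : C) : R := (fst s - p) ^ 2 + (snd s - q) ^ 2.

Definition Fa (p q : R) (s : C) : C :=
  (fst s + p + ((p^2 - q^2) * (fst s - p) + 2 * p * q * (snd s - q)) / dsq p q s,
   snd s + q + (2 * p * q * (fst s - p) - (p^2 - q^2) * (snd s - q)) / dsq p q s).

Lemma dsq_pos (p q : R) (s : C) : 0 < fst s - p -> 0 < dsq p q s.
Proof.
  intros Hc. unfold dsq. assert (0 < (fst s - p) ^ 2) by (apply pow_lt; lra).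
  pose proof (pow2_ge_0 (snd s - q)). lra.
Qed.

Lemma Fa_mul (p q : R) (s : C) : 0 < dsq p q s ->
  Cmult (Fa p q s) (Cminus s (p, q)) = Cmult s s.
Proof.
  intros HN. destruct s as [x y]. unfold Fa, dsq in *. simpl in *.
  unfold Cmult, Cminus, Cplus, Copp; simpl.
  apply injective_projections; simpl; field; lra.
Qed.

(** Conjugation: if [s = 1/(1 - z)] then [F(s) = 1/(1 - phi(z))], because
    [1 - phi(z) = w - a w^2] with [w = 1 - z]. *)
Lemma quad_map_conj (p q : R) (z s : C) :
  Cmult (Cminus 1 z) s = 1 -> 0 < dsq p q s ->
  Cmult (Cminus 1 (quad_map (p, q) z)) (Fa p q s) = 1.
Proof.
  intros H1 HN. pose proof (Fa_mul p q s HN) as H2.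
  assert (Hne : Cminus s (p, q) <> 0).
  { intro E. unfold dsq in HN. destruct s as [x y]. simpl in HN.
    injection E as E1 E2. assert (x = p) by lra. assert (y = q) by lra. subst. lra. }
  set (a := (p, q)) in *. set (w := Cminus 1 z) in *. set (F := Fa p q s) in *.
  assert (Hq : Cminus 1 (quad_map a z) = Cminus w (Cmult a (Cmult w w))).
  { unfold w, quad_map. ring. }
  rewrite Hq.
  assert (E : Cmult (Cminus (Cmult (Cminus w (Cmult a (Cmult w w))) F) 1) (Cminus s a) = 0).
  { transitivity (Cminus (Cmult (Cminus w (Cmult a (Cmult w w))) (Cmult F (Cminus s a)))
                         (Cminus s a)); [ring|].
    rewrite H2.
    transitivity (Cminus (Cminus (Cmult (Cmult w s) s)
                                 (Cmult a (Cmult (Cmult w s) (Cmult w s)))) (Cminus s a));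
      [ring|].
    rewrite H1. ring. }
  apply Cmult_reg_r in E; [|exact Hne].
  transitivity (Cplus (Cminus (Cmult (Cminus w (Cmult a (Cmult w w))) F) 1) 1); [ring|].
  rewrite E. ring.
Qed.

Lemma Fa_re_identity (p q : R) (s : C) : 0 < fst s - p ->
  (fst (Fa p q s) - fst s - p) * dsq p q s * (fst s - p) + q ^ 2 * dsq p q s =
  (p * (fst s - p) + q * (snd s - q)) ^ 2.
Proof.
  intros Hc. pose proof (dsq_pos p q s Hc) as HN.
  destruct s as [x y]. unfold Fa, dsq in *; simpl in *. field. lra.
Qed.

Lemma Fa_re_lower (p q : R) (s : C) : 0 < fst s - p ->
  fst (Fa p q s) >= fst s + p - q ^ 2 / (fst s - p).
Proof.
  intros Hc. pose proof (Fa_re_identity p q s Hc) as E.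
  pose proof (dsq_pos p q s Hc) as HN.
  set (c := fst s - p) in *. set (X := fst (Fa p q s) - fst s - p) in *.
  assert (0 <= X * c + q ^ 2).
  { apply Rmult_le_reg_r with (dsq p q s); [lra|].
    pose proof (pow2_ge_0 (p * c + q * (snd s - q))).
    replace ((X * c + q ^ 2) * dsq p q s)
      with (X * dsq p q s * c + q ^ 2 * dsq p q s) by ring. lra. }
  assert (- (q ^ 2 / c) <= X).
  { apply Rmult_le_reg_r with c; [lra|].
    replace (- (q ^ 2 / c) * c) with (- q ^ 2) by (field; lra). lra. }
  unfold X in *. lra.
Qed.

Lemma Fa_re_ge (p q : R) (s : C) : p^2 + q^2 <= p/2 -> fst s > 1/2 ->
  fst (Fa p q s) >= fst s.
Proof.
  intros Ha Hs. assert (Hp : 0 <= p <= 1/2) by nra.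
  assert (Hc : 0 < fst s - p) by lra.
  pose proof (Fa_re_lower p q s Hc).
  assert (q ^ 2 / (fst s - p) <= p).
  { apply Rmult_le_reg_r with (fst s - p); [lra|].
    replace (q ^ 2 / (fst s - p) * (fst s - p)) with (q ^ 2) by (field; lra). nra. }
  lra.
Qed.

Lemma quad_map_halfplane (p q : R) (z : C) : p^2 + q^2 <= p/2 -> unit_disk z ->
  exists s, fst s > 1/2 /\ Cmult (Cminus 1 (quad_map (p, q) z)) (Fa p q s) = 1.
Proof.
  intros Ha Hz. destruct (disk_to_halfplane z Hz) as [s [Hs1 Hs2]].
  exists s. split; [exact Hs2|]. apply quad_map_conj; [exact Hs1|].
  apply dsq_pos. nra.
Qed.

Lemma quad_selfmap (p q : R) (z : C) : p^2 + q^2 <= p/2 ->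
  unit_disk z -> unit_disk (quad_map (p, q) z).
Proof.
  intros Ha Hz. destruct (quad_map_halfplane p q z Ha Hz) as [s [Hs H]].
  apply (halfplane_to_disk _ _ H). pose proof (Fa_re_ge p q s Ha Hs). lra.
Qed.

(** ** Two steps of [F] gain a uniform margin on the boundary circle

   Assume [p^2 + q^2 = p/2] and [q <> 0], and write [b = 1/2 - p > 0],
   [s = (sg, t)], [N = |s - a|^2] and [K = Re(conj a (s - a))].  One step
   gives [(Re F(s) - Re s) (Re s - p) N >= K^2].  If neither [s] nor [F(s)]
   is [delta]-far from the line [Re = 1/2], then [K] is small, which forces
   [K' = Re(conj a (F(s) - a)) >= p/4]; the second step then gains [delta]. *)

(** Bound for the factor [1 + p/(2N)] relating [K'] to [K]. *)
Definition Mbound (p : R) : R := 1 + p / (2 * (1/2 - p) ^ 2).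
(** Bound for [|F(s) - a|^2] when [s] is close to the line [Re = 1/2]. *)
Definition Wbound (p : R) : R := 5 + 1 / (8 * (1/2 - p) ^ 2).

Definition delta (p q : R) : R :=
  Rmin (Rmin (1/2) (q^2/8)) (Rmin (p^2 / (80 * Mbound p ^ 2)) (p^2 / (16 * Wbound p))).

Section TwoStepGain.

Variables p q : R.
Hypothesis on_circle : p^2 + q^2 = p/2.
Hypothesis q_nonzero : 0 < q^2.

Let b := 1/2 - p.
Let d := delta p q.

Lemma circle_p_range : 0 < p < 1/2.
Proof. nra. Qed.

Lemma circle_q2 : q^2 = p * b.
Proof. unfold b. nra. Qed.

Lemma Mbound_ge1 : 1 <= Mbound p.
Proof.
  pose proof circle_p_range. assert (0 < (1/2 - p) ^ 2) by (apply pow_lt; lra).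
  unfold Mbound. assert (0 < p / (2 * (1/2 - p) ^ 2)) by (apply Rdiv_lt_0_compat; lra). lra.
Qed.

Lemma Wbound_pos : 0 < Wbound p.
Proof.
  pose proof circle_p_range. assert (0 < (1/2 - p) ^ 2) by (apply pow_lt; lra).
  unfold Wbound. assert (0 < 1 / (8 * (1/2 - p) ^ 2)) by (apply Rdiv_lt_0_compat; lra). lra.
Qed.

Lemma delta_pos : 0 < d.
Proof.
  pose proof circle_p_range. pose proof Mbound_ge1. pose proof Wbound_pos.
  assert (0 < p ^ 2) by (apply pow_lt; lra).
  assert (0 < Mbound p ^ 2) by (apply pow_lt; lra).
  unfold d, delta. repeat apply Rmin_pos; apply Rdiv_lt_0_compat; lra.
Qed.

Lemma delta_spec :
  d <= 1/2 /\ d <= q^2/8 /\ d * (80 * Mbound p ^ 2) <= p^2 /\ d * (16 * Wbound p) <= p^2.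
Proof.
  pose proof Mbound_ge1. pose proof Wbound_pos.
  assert (0 < Mbound p ^ 2) by (apply pow_lt; lra).
  assert (H3 : d <= p^2 / (80 * Mbound p ^ 2))
    by (unfold d, delta; eapply Rle_trans; [apply Rmin_r | apply Rmin_l]).
  assert (H4 : d <= p^2 / (16 * Wbound p))
    by (unfold d, delta; eapply Rle_trans; [apply Rmin_r | apply Rmin_r]).
  apply Rmult_le_compat_r with (r := 80 * Mbound p ^ 2) in H3; [|lra].
  apply Rmult_le_compat_r with (r := 16 * Wbound p) in H4; [|lra].
  replace (p^2 / (80 * Mbound p ^ 2) * (80 * Mbound p ^ 2)) with (p^2) in H3 by (field; lra).
  replace (p^2 / (16 * Wbound p) * (16 * Wbound p)) with (p^2) in H4 by (field; lra).
  repeat split; try lra.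
  - unfold d, delta. eapply Rle_trans; [apply Rmin_l | apply Rmin_l].
  - unfold d, delta. eapply Rle_trans; [apply Rmin_l | apply Rmin_r].
Qed.

Lemma small_gain_bounds (sg t N K g : R) :
  sg > 1/2 -> N = (sg - p)^2 + (t - q)^2 -> K = p * sg + q * t - p/2 ->
  0 <= g -> sg + g - 1/2 < d -> g * (sg - p) * N >= K^2 ->
  K^2 <= 5 * d /\ t^2 <= 5/4.
Proof.
  intros Hs HN HK Hg Hsmall HgN.
  pose proof circle_p_range. pose proof delta_pos. pose proof circle_q2.
  destruct delta_spec as [Hd1 [Hd2 _]].
  set (x := sg - 1/2) in *.
  assert (Hx : 0 < x < d) by (unfold x; lra).
  assert (HNpos : 0 < N).
  { rewrite HN. pose proof (pow2_ge_0 (t - q)).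
    assert (0 < (sg - p)^2) by (apply pow_lt; lra). lra. }
  assert (HK2 : K^2 <= d * N).
  { assert (g * (sg - p) <= d) by nra. nra. }
  assert (HqtK : q * t = K - p * x) by (unfold x; rewrite HK; field).
  assert (Hqt2 : q^2 * t^2 <= 2 * K^2 + 2 * d^2).
  { replace (q^2 * t^2) with ((q * t)^2) by ring. rewrite HqtK.
    assert (0 <= p * x <= d) by nra.
    pose proof (pow2_ge_0 (K + p * x)). nra. }
  assert (HNt : N <= 2 + 2 * t^2).
  { rewrite HN. assert ((sg - p)^2 <= 1) by nra.
    assert ((t - q)^2 <= 2 * t^2 + 2 * q^2) by (pose proof (pow2_ge_0 (t + q)); nra).
    assert (q^2 <= 1/2) by nra. lra. }
  assert (Ht2 : t^2 <= 5/4).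
  { assert (q^2 * t^2 <= 4 * d + 4 * d * t^2 + 2 * d^2) by nra.
    assert (4 * d * t^2 <= q^2 * t^2 / 2) by (pose proof (pow2_ge_0 t); nra).
    assert (q^2 * t^2 <= 10 * (q^2 / 8)) by nra. nra. }
  split; [nra | exact Ht2].
Qed.

Lemma K_transfer_lower (N K K' : R) :
  b^2 <= N -> K^2 <= 5 * d -> K' * N = (p/2) * N + K * (N + p/2) -> K' >= p/4.
Proof.
  intros HbN HK5 HKK.
  pose proof circle_p_range. destruct delta_spec as [_ [_ [Hd3 _]]].
  assert (Hb2 : 0 < b^2) by (unfold b; apply pow_lt; lra).
  set (m := 1 + p / (2 * N)).
  assert (Hm : 1 <= m <= Mbound p).
  { unfold m, Mbound. split.
    - assert (0 <= p / (2 * N)) by (apply Rlt_le, Rdiv_lt_0_compat; lra). lra.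
    - assert (p / (2 * N) <= p / (2 * (1/2 - p)^2)); [|lra].
      apply Rmult_le_compat_l; [lra|]. apply Rinv_le_contravar; fold b; lra. }
  assert (HKm : K' = p/2 + K * m).
  { apply Rmult_eq_reg_r with N; [|lra]. rewrite HKK. unfold m. field. lra. }
  assert (HKm2 : (K * m)^2 <= p^2/16).
  { assert (m^2 <= Mbound p ^ 2) by nra.
    assert (K^2 * m^2 <= 5 * d * Mbound p ^ 2).
    { apply Rmult_le_compat; try apply pow2_ge_0; lra. }
    replace ((K * m)^2) with (K^2 * m^2) by ring. lra. }
  destruct (Rle_or_lt (p/4) K') as [|Hl]; [lra|]. exfalso.
  assert ((p/4)^2 < (K * m)^2) by nra. nra.
Qed.

Lemma dsq_image_upper (sg t N N' : R) :
  1/2 < sg < 1 -> t^2 <= 5/4 -> b^2 <= N ->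
  N' <= 2 * (sg^2 + t^2) + p^2 / (2 * N) -> N' <= Wbound p.
Proof.
  intros Hs Ht HbN HN'.
  pose proof circle_p_range.
  assert (Hb2 : 0 < b^2) by (unfold b; apply pow_lt; lra).
  assert (sg^2 <= 1) by nra. assert (p^2 <= 1/4) by nra.
  assert (Hinv : / (2 * N) <= / (2 * b^2)) by (apply Rinv_le_contravar; lra).
  assert (p^2 / (2 * N) <= 1 / (8 * b^2)).
  { unfold Rdiv. replace (1 * / (8 * b^2)) with (1/4 * / (2 * b^2)) by (field; unfold b; lra).
    apply Rmult_le_compat; [apply pow2_ge_0 | left; apply Rinv_0_lt_compat; lra | lra | lra]. }
  unfold Wbound. fold b. lra.
Qed.

Lemma second_step_gain (sg' sg'' N' K' : R) :
  0 < sg' - p <= 1 -> 0 <= N' <= Wbound p -> K' >= p/4 -> sg'' >= sg' ->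
  (sg'' - sg') * (sg' - p) * N' >= K'^2 -> sg'' - sg' >= d.
Proof.
  intros Hc' HN' HK' Hmon Hgain.
  pose proof circle_p_range. pose proof Wbound_pos.
  destruct delta_spec as [_ [_ [_ Hd4]]].
  assert (A : (sg'' - sg') * Wbound p >= p^2/16).
  { assert ((sg' - p) * N' <= Wbound p) by nra.
    assert ((sg'' - sg') * ((sg' - p) * N') <= (sg'' - sg') * Wbound p)
      by (apply Rmult_le_compat_l; lra).
    assert ((p/4)^2 <= K'^2) by (apply pow_incr; lra). nra. }
  apply Rle_ge, Rmult_le_reg_r with (Wbound p); [lra|]. lra.
Qed.

Lemma two_step_gain (sg t sg' sg'' N N' K K' : R) :
  sg > 1/2 ->
  N = (sg - p)^2 + (t - q)^2 -> K = p * sg + q * t - p/2 ->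
  sg' >= sg -> (sg' - sg) * (sg - p) * N >= K^2 ->
  sg'' >= sg' -> (sg'' - sg') * (sg' - p) * N' >= K'^2 ->
  0 <= N' -> N' <= 2 * (sg^2 + t^2) + p^2 / (2 * N) ->
  K' * N = (p/2) * N + K * (N + p/2) ->
  sg'' - 1/2 >= d.
Proof.
  intros Hs HN HK H1a H1b H2a H2b HN'0 HN' HKK.
  pose proof circle_p_range. destruct delta_spec as [Hd1 _].
  destruct (Rle_or_lt d (sg' - 1/2)) as [Hfar | Hnear]; [lra|].
  destruct (small_gain_bounds sg t N K (sg' - sg) Hs HN HK ltac:(lra)
              ltac:(lra) H1b) as [HK5 Ht].
  assert (HbN : b^2 <= N) by (rewrite HN; unfold b; pose proof (pow2_ge_0 (t - q)); nra).
  pose proof (K_transfer_lower N K K' HbN HK5 HKK) as HK'.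
  pose proof (dsq_image_upper sg t N N' ltac:(lra) Ht HbN HN') as HW.
  pose proof (second_step_gain sg' sg'' N' K' ltac:(lra) ltac:(lra) HK' H2a H2b).
  lra.
Qed.

End TwoStepGain.

Lemma Fa_K_identity (p q : R) (s : C) : 0 < fst s - p ->
  (p * fst (Fa p q s) + q * snd (Fa p q s) - (p^2 + q^2)) * dsq p q s =
  (p^2 + q^2) * dsq p q s
  + (p * fst s + q * snd s - (p^2 + q^2)) * (dsq p q s + (p^2 + q^2)).
Proof.
  intros Hc. pose proof (dsq_pos p q s Hc) as HN.
  destruct s as [x y]. unfold Fa, dsq in *; simpl in *. field. lra.
Qed.

(** [|F(s) - a|^2 <= 2 |s|^2 + 2 |a|^4 / |s - a|^2], by the parallelogram law
    applied to [F(s) - a = s + a^2/(s - a)]. *)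
Lemma dsq_Fa_upper (p q : R) (s : C) : 0 < fst s - p ->
  dsq p q (Fa p q s) <= 2 * (fst s ^ 2 + snd s ^ 2) + 2 * (p^2 + q^2)^2 / dsq p q s.
Proof.
  intros Hc. pose proof (dsq_pos p q s Hc) as HN.
  destruct s as [x y]. unfold Fa. unfold dsq at 1. cbn [fst snd] in *.
  set (N := dsq p q (x, y)) in *.
  assert (HNe : N = (x - p)^2 + (y - q)^2) by reflexivity.
  set (al := (p ^ 2 - q ^ 2) * (x - p) + 2 * p * q * (y - q)).
  set (be := 2 * p * q * (x - p) - (p ^ 2 - q ^ 2) * (y - q)).
  assert (Hab : al^2 + be^2 = (p^2 + q^2)^2 * N) by (unfold al, be; rewrite HNe; ring).
  replace (x + p + al / N - p) with (x + al / N) by ring.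
  replace (y + q + be / N - q) with (y + be / N) by ring.
  assert (Hs : (al/N)^2 + (be/N)^2 = (p^2 + q^2)^2 / N).
  { replace ((al/N)^2 + (be/N)^2) with ((al^2 + be^2) / N^2) by (field; lra).
    rewrite Hab. field. lra. }
  pose proof (pow2_ge_0 (x - al / N)). pose proof (pow2_ge_0 (y - be / N)).
  assert (E : (x + al/N)^2 + (y + be/N)^2 + (x - al/N)^2 + (y - be/N)^2
             = 2 * (x^2 + y^2) + 2 * ((al/N)^2 + (be/N)^2)) by ring.
  rewrite Hs in E.
  replace (2 * (p ^ 2 + q ^ 2) ^ 2 / N) with (2 * ((p ^ 2 + q ^ 2) ^ 2 / N)) by (field; lra).
  lra.
Qed.

Lemma Fa_gain_circle (p q : R) (s : C) :
  p^2 + q^2 = p/2 -> fst s >= 1/2 -> 0 < fst s - p ->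
  (fst (Fa p q s) - fst s) * (fst s - p) * dsq p q s >= (p * fst s + q * snd s - p/2)^2 /\
  fst (Fa p q s) >= fst s.
Proof.
  intros Hpq Hs Hc. pose proof (Fa_re_identity p q s Hc) as E.
  pose proof (dsq_pos p q s Hc) as HN.
  replace (p * (fst s - p) + q * (snd s - q)) with (p * fst s + q * snd s - p/2) in E
    by (rewrite <- Hpq; ring).
  set (K := p * fst s + q * snd s - p/2) in *.
  set (N := dsq p q s) in *. set (c := fst s - p) in *.
  assert (Hpc : p * c - q^2 >= 0) by (unfold c; nra).
  assert (E2 : (fst (Fa p q s) - fst s) * c * N = K^2 + (p * c - q^2) * N)
    by (rewrite <- E; ring).
  assert (0 <= (p * c - q^2) * N) by (apply Rmult_le_pos; lra).
  pose proof (pow2_ge_0 K).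
  split; [lra|].
  assert (0 < c * N) by (apply Rmult_lt_0_compat; lra).
  destruct (Rle_or_lt 0 (fst (Fa p q s) - fst s)); [lra|]. nra.
Qed.

Lemma Fa2_gain_circle (p q : R) (s : C) : p^2 + q^2 = p/2 -> 0 < q^2 -> fst s > 1/2 ->
  fst (Fa p q (Fa p q s)) - 1/2 >= delta p q.
Proof.
  intros Hpq Hq Hs.
  pose proof (circle_p_range p q Hpq Hq) as Hp.
  assert (Hc : 0 < fst s - p) by lra.
  destruct (Fa_gain_circle p q s Hpq ltac:(lra) Hc) as [H1b H1a].
  set (s' := Fa p q s) in *.
  assert (Hc' : 0 < fst s' - p) by lra.
  destruct (Fa_gain_circle p q s' Hpq ltac:(lra) Hc') as [H2b H2a].
  pose proof (dsq_pos p q s Hc) as HN.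
  pose proof (dsq_Fa_upper p q s Hc) as HB. fold s' in HB. rewrite Hpq in HB.
  replace (2 * (p / 2) ^ 2 / dsq p q s) with (p^2 / (2 * dsq p q s)) in HB by (field; lra).
  pose proof (Fa_K_identity p q s Hc) as HKK. fold s' in HKK. rewrite Hpq in HKK.
  apply (two_step_gain p q Hpq Hq (fst s) (snd s) (fst s') (fst (Fa p q s'))
           (dsq p q s) (dsq p q s')
           (p * fst s + q * snd s - p/2) (p * fst s' + q * snd s' - p/2));
    try assumption; try reflexivity.
  unfold dsq. pose proof (pow2_ge_0 (fst s' - p)). pose proof (pow2_ge_0 (snd s' - q)). lra.
Qed.

(** ** Boundary behaviour of maps that are Lipschitz up to a boundary point *)

Definition lip_at (f : C -> C) (g : C) (L : R) : Prop :=
  forall z, unit_disk z -> Cmod (Cminus (f z) (f g)) <= L * Cmod (Cminus z g).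

Lemma radial_point (g : C) (h : R) : Cmod g = 1 -> 0 < h <= 1/2 ->
  unit_disk (Cmult (RtoC (1 - h)) g) /\ Cmod (Cminus (Cmult (RtoC (1 - h)) g) g) = h.
Proof.
  intros Hg Hh. split.
  - unfold unit_disk. rewrite Cmod_mult, Cmod_R, Hg, Rabs_pos_eq; lra.
  - replace (Cminus (Cmult (RtoC (1 - h)) g) g) with (Cmult (RtoC (- h)) g).
    + rewrite Cmod_mult, Cmod_R, Hg, Rabs_left; lra.
    + apply injective_projections; simpl; ring.
Qed.

(** A radial point within [h <= e/(2 (L + 1))] of [g]: there [f] is within
    [e/2] of [f g]. *)
Lemma radial_point_close (f : C -> C) (g : C) (L e : R) :
  Cmod g = 1 -> 0 <= L -> 0 < e -> lip_at f g L ->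
  exists z, unit_disk z /\ Cmod (Cminus z g) < e /\ Cmod (Cminus (f z) (f g)) <= e / 2.
Proof.
  intros Hg HL He Hl.
  set (h := Rmin (1/2) (e / (2 * (L + 1)))).
  assert (Hh : 0 < h <= 1/2).
  { split; [apply Rmin_pos; [lra | apply Rdiv_lt_0_compat; lra] | apply Rmin_l]. }
  assert (HhL : L * h <= e / 2 /\ h < e).
  { assert (h <= e / (2 * (L + 1))) by apply Rmin_r.
    assert (e / (2 * (L + 1)) * (2 * (L + 1)) = e) by (field; lra). nra. }
  destruct (radial_point g h Hg Hh) as [Hz Hd].
  exists (Cmult (RtoC (1 - h)) g). split; [exact Hz|]. rewrite Hd. split; [lra|].
  specialize (Hl _ Hz). rewrite Hd in Hl. lra.
Qed.

Lemma boundary_value_in_closure (f : C -> C) (c : C) (r L : R) (g : C) :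
  Cmod g = 1 -> 0 <= L ->
  (forall z, unit_disk z -> Cmod (Cminus (f z) c) < r) -> lip_at f g L ->
  Cmod (Cminus (f g) c) <= r.
Proof.
  intros Hg HL Hin Hl.
  destruct (Rle_or_lt (Cmod (Cminus (f g) c)) r) as [H | H]; [exact H|]. exfalso.
  destruct (radial_point_close f g L (Cmod (Cminus (f g) c) - r) Hg HL ltac:(lra) Hl)
    as [z [Hz [_ Hfz]]].
  specialize (Hin z Hz).
  pose proof (Cmod_sub_triangle (f g) (f z) c) as Ht.
  rewrite (Cmod_sub_sym (f g) (f z)) in Ht. lra.
Qed.

Lemma cluster_self (f : C -> C) (g : C) (L : R) : Cmod g = 1 -> 0 <= L -> lip_at f g L ->
  in_cluster_set f g (f g).
Proof.
  intros Hg HL Hl eps He.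
  destruct (radial_point_close f g L eps Hg HL He Hl) as [z [Hz [Hzg Hfz]]].
  exists z. repeat split; [exact Hz | exact Hzg | lra].
Qed.

Lemma cluster_only_self (f : C -> C) (g w : C) (L : R) :
  Cmod g = 1 -> 0 <= L -> lip_at f g L -> f g <> w -> ~ in_cluster_set f g w.
Proof.
  intros Hg HL Hl Hne Hc.
  assert (Hd : 0 < Cmod (Cminus (f g) w)).
  { apply Cmod_gt_0. intro E. apply Hne.
    apply injective_projections; injection E; simpl; lra. }
  set (d := Cmod (Cminus (f g) w)) in *.
  destruct (Hc (d / (2 * (L + 1)))) as [z [Hz [H1 H2]]]; [apply Rdiv_lt_0_compat; lra|].
  specialize (Hl _ Hz).
  pose proof (Cmod_sub_triangle (f g) (f z) w) as Ht.
  rewrite (Cmod_sub_sym (f g) (f z)) in Ht.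
  assert (L * (d / (2 * (L + 1))) + d / (2 * (L + 1)) = d / 2) by (field; lra).
  assert (L * Cmod (Cminus z g) <= L * (d / (2 * (L + 1)))) by (apply Rmult_le_compat_l; lra).
  fold d in Ht. lra.
Qed.

Lemma tangent_disk_meets_circle (w eta : C) (r : R) :
  Cmod w = 1 -> Cmod eta = 1 -> 0 < r < 1 ->
  Cmod (Cminus w (Cmult (RtoC (1 - r)) eta)) <= r -> w = eta.
Proof.
  intros Hw He Hr H.
  apply Cmod_eq_sqmod in Hw; [|lra]. apply Cmod_eq_sqmod in He; [|lra].
  apply Cmod_le_sqmod in H; [|lra].
  destruct w as [w1 w2], eta as [e1 e2].
  unfold sqmod, Cminus, Cplus, Copp, Cmult, RtoC in *; simpl in *.
  assert (w1 * e1 + w2 * e2 >= 1) by nra.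
  assert ((w1 - e1)^2 + (w2 - e2)^2 <= 0) by nra.
  assert (w1 - e1 = 0) by (apply Rsqr_0_uniq, Rle_antisym; [unfold Rsqr; nra | apply Rle_0_sqr]).
  assert (w2 - e2 = 0) by (apply Rsqr_0_uniq, Rle_antisym; [unfold Rsqr; nra | apply Rle_0_sqr]).
  f_equal; lra.
Qed.

Lemma ELF_boundary_values_equal (f : C -> C) (g1 g2 : C) (L1 L2 : R) :
  Cmod g1 = 1 -> Cmod g2 = 1 -> Cmod (f g1) = 1 -> Cmod (f g2) = 1 ->
  0 <= L1 -> 0 <= L2 -> lip_at f g1 L1 -> lip_at f g2 L2 ->
  essentially_linear_fractional f -> f g1 = f g2.
Proof.
  intros H1 H2 H3 H4 HL1 HL2 Hl1 Hl2 [eta [zeta [_ [He [_ [[r [Hr Hin]] _]]]]]].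
  unfold unit_circle in He.
  pose proof (boundary_value_in_closure f _ r L1 g1 H1 HL1 Hin Hl1) as B1.
  pose proof (boundary_value_in_closure f _ r L2 g2 H2 HL2 Hin Hl2) as B2.
  rewrite (tangent_disk_meets_circle _ _ r H3 He Hr B1),
          (tangent_disk_meets_circle _ _ r H4 He Hr B2).
  reflexivity.
Qed.

Lemma ELF_boundary_injective (f : C -> C) (g1 g2 : C) (L1 L2 : R) :
  Cmod g1 = 1 -> Cmod g2 = 1 -> Cmod (f g1) = 1 -> f g1 = f g2 ->
  0 <= L1 -> 0 <= L2 -> lip_at f g1 L1 -> lip_at f g2 L2 ->
  essentially_linear_fractional f -> g1 = g2.
Proof.
  intros H1 H2 H3 Heq HL1 HL2 Hl1 Hl2 [eta [zeta [_ [He [_ [[r [Hr Hin]] [Hcl _]]]]]]].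
  unfold unit_circle in He.
  pose proof (boundary_value_in_closure f _ r L1 g1 H1 HL1 Hin Hl1) as B1.
  pose proof (tangent_disk_meets_circle _ _ r H3 He Hr B1) as E.
  pose proof (cluster_self f g1 L1 H1 HL1 Hl1) as C1.
  pose proof (cluster_self f g2 L2 H2 HL2 Hl2) as C2.
  rewrite E in C1. rewrite <- Heq, E in C2.
  apply (proj1 (Hcl g1 H1)) in C1. apply (proj1 (Hcl g2 H2)) in C2.
  congruence.
Qed.

Lemma quarter_disk_sqmod (p q : R) :
  sqmod (Cminus (p, q) (RtoC (1/4))) = (1/4) ^ 2 + (p^2 + q^2 - p/2).
Proof. unfold sqmod, Cminus, Cplus, Copp, RtoC; cbn [fst snd]. field. Qed.

Lemma quarter_disk_lt (p q : R) :
  Cmod (Cminus (p, q) (RtoC (1/4))) < 1/4 -> p^2 + q^2 < p/2.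
Proof.
  intro H. apply Cmod_lt_sqmod in H; [|lra]. rewrite quarter_disk_sqmod in H. lra.
Qed.

Lemma quarter_disk_eq (p q : R) :
  Cmod (Cminus (p, q) (RtoC (1/4))) = 1/4 -> p^2 + q^2 = p/2.
Proof.
  intro H. apply Cmod_eq_sqmod in H; [|lra]. rewrite quarter_disk_sqmod in H. lra.
Qed.

Lemma quad_one (a : C) : quad_map a 1 = 1.
Proof. unfold quad_map. ring. Qed.

Lemma quad_diff (a z w : C) : Cminus (quad_map a z) (quad_map a w) =
  Cmult (Cminus z w) (Cplus 1 (Cmult a (Cminus (Cplus z w) 2))).
Proof. unfold quad_map. ring. Qed.

Definition lipschitz_closed_disk (f : C -> C) (L : R) : Prop :=
  forall z w, Cmod z <= 1 -> Cmod w <= 1 ->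
    Cmod (Cminus (f z) (f w)) <= L * Cmod (Cminus z w).

Definition maps_closed_disk (f : C -> C) : Prop :=
  forall z, Cmod z <= 1 -> Cmod (f z) <= 1.

Lemma lip_at_of_lipschitz (f : C -> C) (L : R) (g : C) :
  lipschitz_closed_disk f L -> Cmod g <= 1 -> lip_at f g L.
Proof. intros Hf Hg z Hz. apply Hf; [left; exact Hz | exact Hg]. Qed.

Lemma iterate_maps_closed_disk (f : C -> C) (n : nat) :
  maps_closed_disk f -> maps_closed_disk (iterate f n).
Proof.
  intros Hf z Hz. induction n as [|n IH]; [exact Hz|].
  unfold iterate in *. rewrite Nat.iter_succ. apply Hf, IH.
Qed.

Lemma iterate_lipschitz (f : C -> C) (L : R) (n : nat) : 0 <= L ->
  maps_closed_disk f -> lipschitz_closed_disk f L ->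
  lipschitz_closed_disk (iterate f n) (L ^ n).
Proof.
  intros HL Hcl Hf z w Hz Hw. induction n as [|n IH]; [simpl; lra|].
  pose proof (iterate_maps_closed_disk f n Hcl z Hz).
  pose proof (iterate_maps_closed_disk f n Hcl w Hw).
  unfold iterate in *. rewrite !Nat.iter_succ.
  eapply Rle_trans; [apply Hf; assumption|].
  simpl. rewrite Rmult_assoc. apply Rmult_le_compat_l; assumption.
Qed.

Lemma Cmod_param_le (p q : R) : p^2 + q^2 <= p/2 -> Cmod (p, q) <= 1/2.
Proof. intro H. apply Cmod_le_sqmod; [lra|]. unfold sqmod; cbn [fst snd]. nra. Qed.

(** [phi'(z) = 1 + a (2z - 2)] has modulus at most [3] on the closed disk. *)
Lemma quad_lipschitz (p q : R) : p^2 + q^2 <= p/2 ->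
  lipschitz_closed_disk (quad_map (p, q)) 3.
Proof.
  intros Ha z w Hz Hw. rewrite quad_diff, Cmod_mult.
  assert (B : Cmod (Cplus 1 (Cmult (p, q) (Cminus (Cplus z w) 2))) <= 3).
  { eapply Rle_trans; [apply Cmod_triangle|]. rewrite Cmod_1, Cmod_mult.
    assert (Cmod (Cminus (Cplus z w) 2) <= 4).
    { unfold Cminus. eapply Rle_trans; [apply Cmod_triangle|]. rewrite Cmod_opp.
      replace (Cmod 2) with 2 by (rewrite Cmod_R, Rabs_pos_eq; lra).
      pose proof (Cmod_triangle z w). lra. }
    pose proof (Cmod_param_le p q Ha). pose proof (Cmod_ge_0 (p, q)).
    pose proof (Cmod_ge_0 (Cminus (Cplus z w) 2)). nra. }
  pose proof (Cmod_ge_0 (Cminus z w)). rewrite (Rmult_comm 3).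
  apply Rmult_le_compat_l; lra.
Qed.

Lemma quad_maps_closed_disk (p q : R) : p^2 + q^2 <= p/2 ->
  maps_closed_disk (quad_map (p, q)).
Proof.
  intros Ha z [Hz | Hz]; [left; apply quad_selfmap; assumption|].
  assert (E : forall w, Cminus w 0 = w) by (intro; apply injective_projections; cbn; ring).
  pose proof (boundary_value_in_closure (quad_map (p, q)) 0 1 3 z Hz ltac:(lra)) as B.
  rewrite E in B. apply B.
  - intros y Hy. rewrite E. apply quad_selfmap; assumption.
  - apply lip_at_of_lipschitz; [apply quad_lipschitz; exact Ha | lra].
Qed.

(** For [a <> 1/2], the only preimage of [1] in the closed disk is [1]:
    [phi(w) - 1 = (w - 1)(1 + a (w - 1))], and [1 + a (w - 1) = 0] would put
    [w] on or outside the circle [|w - (1 - 1/a)| = 1/|a|], which for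
    [p^2 + q^2 <= p/2] meets the closed disk only when [a = 1/2]. *)
Lemma quad_preimage_one (p q : R) (w : C) :
  p^2 + q^2 <= p/2 -> (p, q) <> RtoC (1/2) -> Cmod w <= 1 ->
  quad_map (p, q) w = 1 -> w = 1.
Proof.
  intros Ha Hne Hw H.
  assert (E : Cmult (Cplus 1 (Cmult (p, q) (Cminus w 1))) (Cminus w 1) = 0).
  { transitivity (Cminus (quad_map (p, q) w) 1); [unfold quad_map; ring|]. rewrite H. ring. }
  destruct (Ceq_dec (Cminus w 1) 0) as [E0 | E0].
  { apply injective_projections; injection E0; cbn; lra. }
  exfalso. apply Cmult_reg_r in E; [|exact E0].
  apply Cmod_le_sqmod in Hw; [|lra].
  destruct w as [w1 w2]. unfold sqmod in Hw; cbn [fst snd] in Hw.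
  injection E as X Y. unfold Cminus, Cplus, Copp, Cmult in X, Y; cbn in X, Y.
  set (g1 := w1 - 1). set (g2 := w2).
  assert (X' : p * g1 - q * g2 = -1) by (unfold g1, g2; lra).
  assert (Y' : p * g2 + q * g1 = 0) by (unfold g1, g2; lra).
  assert (Hg : g1^2 + g2^2 + 2 * g1 <= 0) by (unfold g1, g2; nra).
  assert (A1 : (p^2 + q^2) * g1 = - p).
  { transitivity (p * (p * g1 - q * g2) + q * (p * g2 + q * g1)); [ring|].
    rewrite X', Y'. ring. }
  assert (A2 : (p^2 + q^2) * (g1^2 + g2^2) = 1).
  { transitivity ((p * g1 - q * g2)^2 + (p * g2 + q * g1)^2); [ring|].
    rewrite X', Y'. ring. }
  assert (HA : 0 < p^2 + q^2).
  { destruct (Rle_or_lt (p^2 + q^2) 0) as [H0 | H0]; [|lra].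
    assert (p^2 + q^2 = 0) as Z by nra. rewrite Z in A2. lra. }
  assert (Hmul : (p^2 + q^2) * (g1^2 + g2^2 + 2 * g1) <= 0) by nra.
  assert (1 - 2 * p <= 0).
  { replace ((p^2 + q^2) * (g1^2 + g2^2 + 2 * g1))
      with ((p^2 + q^2) * (g1^2 + g2^2) + 2 * ((p^2 + q^2) * g1)) in Hmul by ring.
    rewrite A1, A2 in Hmul. lra. }
  assert (p = 1/2) by nra. assert (q = 0) by nra.
  apply Hne. subst. reflexivity.
Qed.

(** ** Complex derivatives of [phi] and [phi o phi]

   Coquelicot gives [C] two normed-module structures (as an absolute-value ring
   over itself, and [C_NormedModule]); its differentiation rules are stated for
   the former while [Defs] uses the latter, so we first transport them. *)

Lemma is_derive_C_iff (f : C -> C) (z l : C) :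
  @is_derive C_AbsRing (AbsRing_NormedModule C_AbsRing) f z l <->
  @is_derive C_AbsRing C_NormedModule f z l.
Proof. split; intros [[A B [M HM]] H2]; (split; [now constructor; try exists M | exact H2]). Qed.

Lemma is_derive_C_id (z : C) : is_derive (fun x : C => x) z (RtoC 1).
Proof. apply is_derive_C_iff. exact (is_derive_id z). Qed.

Lemma is_derive_C_const (c z : C) : is_derive (fun _ : C => c) z (RtoC 0).
Proof. exact (is_derive_const (V := C_NormedModule) c z). Qed.

Lemma is_derive_C_plus (f g : C -> C) (z df dg : C) :
  is_derive f z df -> is_derive g z dg ->
  is_derive (fun x => Cplus (f x) (g x)) z (Cplus df dg).
Proof. exact (is_derive_plus f g z df dg). Qed.

Lemma is_derive_C_mult (f g : C -> C) (z df dg : C) :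
  is_derive f z df -> is_derive g z dg ->
  is_derive (fun x => Cmult (f x) (g x)) z (Cplus (Cmult df (g z)) (Cmult (f z) dg)).
Proof.
  intros H1 H2. apply is_derive_C_iff.
  exact (is_derive_mult f g z df dg (proj2 (is_derive_C_iff _ _ _) H1)
           (proj2 (is_derive_C_iff _ _ _) H2) Cmult_comm).
Qed.

Lemma is_derive_C_comp (f g : C -> C) (z df dg : C) :
  is_derive f (g z) df -> is_derive g z dg ->
  is_derive (fun x => f (g x)) z (Cmult dg df).
Proof.
  intros H1 H2. exact (is_derive_comp f g z df dg H1 (proj2 (is_derive_C_iff _ _ _) H2)).
Qed.

Lemma is_derive_C_eq (f : C -> C) (z d d' : C) : d = d' -> is_derive f z d -> is_derive f z d'.
Proof. intros E D. rewrite <- E. exact D. Qed.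

Definition dquad (a z : C) : C := Cplus (Cmult (Cmult 2 a) z) (Cminus 1 (Cmult 2 a)).

Lemma is_derive_quad (a z : C) : is_derive (quad_map a) z (dquad a z).
Proof.
  eapply is_derive_C_eq; [|
    apply is_derive_C_plus;
    [ apply is_derive_C_plus;
      [ apply is_derive_C_mult;
        [ apply is_derive_C_const
        | apply is_derive_C_mult; apply is_derive_C_id ]
      | apply is_derive_C_mult; [apply is_derive_C_const | apply is_derive_C_id] ]
    | apply is_derive_C_const ]].
  unfold dquad. ring.
Qed.

Lemma is_derive_dquad (a z : C) : is_derive (dquad a) z (Cmult 2 a).
Proof.
  eapply is_derive_C_eq; [|
    apply is_derive_C_plus;
    [ apply is_derive_C_mult; [apply is_derive_C_const | apply is_derive_C_id]
    | apply is_derive_C_const ]].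
  cbv beta. ring.
Qed.

Lemma third_deriv_extends_affine (f f1 f2 f3 : C -> C) (zeta L c : C) :
  (forall z, unit_disk z -> is_derive f z (f1 z)) ->
  (forall z, unit_disk z -> is_derive f1 z (f2 z)) ->
  (forall z, unit_disk z -> is_derive f2 z (f3 z)) ->
  (forall z, Cminus (f3 z) L = Cmult c (Cminus z zeta)) ->
  third_deriv_extends f zeta.
Proof.
  intros D1 D2 D3 Haff. exists f1, f2, f3.
  split; [exact D1 | split; [exact D2 | split; [exact D3 |]]].
  exists L. intros eps He. pose proof (Cmod_ge_0 c).
  exists (eps / (Cmod c + 1)). split; [apply Rdiv_lt_0_compat; lra|].
  intros z _ Hz. rewrite Haff, Cmod_mult.
  assert (Cmod c * Cmod (Cminus z zeta) <= Cmod c * (eps / (Cmod c + 1)))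
    by (apply Rmult_le_compat_l; lra).
  assert (Cmod c * (eps / (Cmod c + 1)) < eps); [|lra].
  apply Rmult_lt_reg_r with (Cmod c + 1); [lra|].
  replace (Cmod c * (eps / (Cmod c + 1)) * (Cmod c + 1)) with (Cmod c * eps) by (field; lra).
  nra.
Qed.

Lemma holomorphic_quad (a : C) : holomorphic_on_disk (quad_map a).
Proof. intros z _. exists (dquad a z). apply is_derive_quad. Qed.

Lemma holomorphic_quad2 (a : C) : holomorphic_on_disk (fun z => quad_map a (quad_map a z)).
Proof.
  intros z _. eexists. exact (is_derive_C_comp _ _ z _ _ (is_derive_quad a _) (is_derive_quad a z)).
Qed.

Lemma third_deriv_quad (a : C) : third_deriv_extends (quad_map a) (RtoC 1).
Proof.
  apply (third_deriv_extends_affine _ (dquad a) (fun _ => Cmult 2 a) (fun _ => RtoC 0)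
           (RtoC 1) (RtoC 0) (RtoC 0)).
  - intros z _. apply is_derive_quad.
  - intros z _. apply is_derive_dquad.
  - intros z _. apply is_derive_C_const.
  - intro z. ring.
Qed.

Lemma third_deriv_quad2 (a : C) :
  third_deriv_extends (fun z => quad_map a (quad_map a z)) (RtoC 1).
Proof.
  set (d2 := fun z => Cplus (Cmult (Cmult 2 a) (dquad a (quad_map a z)))
                            (Cmult (dquad a z) (Cmult (dquad a z) (Cmult 2 a)))).
  apply (third_deriv_extends_affine _
           (fun z => Cmult (dquad a z) (dquad a (quad_map a z))) d2
           (fun z => Cmult (Cmult 12 (Cmult a a)) (dquad a z))
           (RtoC 1) (Cmult (Cmult 12 (Cmult a a)) (dquad a 1))
           (Cmult (Cmult 12 (Cmult a a)) (Cmult 2 a))).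
  - intros z _. exact (is_derive_C_comp _ _ z _ _ (is_derive_quad a _) (is_derive_quad a z)).
  - intros z _. eapply is_derive_C_eq; [|
      apply is_derive_C_mult;
      [ apply is_derive_dquad
      | apply (is_derive_C_comp (dquad a) (quad_map a));
        [apply is_derive_dquad | apply is_derive_quad] ]].
    cbv beta. unfold d2. ring.
  - intros z _. eapply is_derive_C_eq; [|
      apply is_derive_C_plus;
      [ apply is_derive_C_mult;
        [ apply is_derive_C_const
        | apply (is_derive_C_comp (dquad a) (quad_map a));
          [apply is_derive_dquad | apply is_derive_quad] ]
      | apply is_derive_C_mult;
        [ apply is_derive_dquad
        | apply is_derive_C_mult; [apply is_derive_dquad | apply is_derive_C_const] ] ]].
    cbv beta. ring.
  - intro z. unfold dquad. ring.
Qed.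

Lemma ELF_at_one (f : C -> C) (L : R) :
  analytic_selfmap f -> in_tangent_subdisk f (RtoC 1) ->
  0 <= L -> lipschitz_closed_disk f L -> f 1 = 1 ->
  (forall w, Cmod w <= 1 -> f w = 1 -> w = 1) ->
  third_deriv_extends f (RtoC 1) ->
  ELF_at f (RtoC 1) (RtoC 1).
Proof.
  intros Hself Htan HL Hlip Hfix Hfiber H3.
  split; [exact Hself|]. split; [exact Cmod_one|]. split; [exact Cmod_one|].
  split; [exact Htan|]. split; [|exact H3].
  intros g Hg. unfold unit_circle in Hg.
  assert (Hlg : lip_at f g L) by (apply lip_at_of_lipschitz; [exact Hlip | lra]).
  split.
  - intro Hc. destruct (Ceq_dec g 1) as [E | E]; [exact E|]. exfalso.
    refine (cluster_only_self f g 1 L Hg HL Hlg _ Hc).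
    intro E2. apply E, Hfiber; [lra | exact E2].
  - intro E. subst g. rewrite <- Hfix at 2. exact (cluster_self f 1 L Hg HL Hlg).
Qed.

Lemma quad_tangent_subdisk (p q : R) : p^2 + q^2 < p/2 ->
  in_tangent_subdisk (quad_map (p, q)) (RtoC 1).
Proof.
  intros Ha. assert (Hp : 0 < p < 1/2) by nra.
  apply (tangent_subdisk_of_margin _ (p - q^2 / (1/2 - p))).
  - assert (q^2 / (1/2 - p) < p); [|lra].
    apply Rmult_lt_reg_r with (1/2 - p); [lra|].
    replace (q ^ 2 / (1/2 - p) * (1/2 - p)) with (q^2) by (field; lra). nra.
  - intros z Hz. destruct (quad_map_halfplane p q z ltac:(lra) Hz) as [s [Hs H]].
    exists (Fa p q s). split; [exact H|].
    pose proof (Fa_re_lower p q s ltac:(lra)).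
    assert (q^2 / (fst s - p) <= q^2 / (1/2 - p)); [|lra].
    unfold Rdiv. apply Rmult_le_compat_l; [apply pow2_ge_0|].
    apply Rinv_le_contravar; lra.
Qed.

Lemma quad2_tangent_subdisk (p q : R) : p^2 + q^2 = p/2 -> 0 < q^2 ->
  in_tangent_subdisk (fun z => quad_map (p, q) (quad_map (p, q) z)) (RtoC 1).
Proof.
  intros Ha Hq. assert (Hp : 0 < p < 1/2) by nra.
  apply (tangent_subdisk_of_margin _ (delta p q)); [apply delta_pos; assumption|].
  intros z Hz. destruct (quad_map_halfplane p q z ltac:(lra) Hz) as [s [Hs H]].
  pose proof (Fa_re_ge p q s ltac:(lra) Hs).
  exists (Fa p q (Fa p q s)). split.
  - apply quad_map_conj; [exact H | apply dsq_pos; lra].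
  - pose proof (Fa2_gain_circle p q s Ha Hq Hs). lra.
Qed.

Lemma quad_minus_one (a : C) : quad_map a (RtoC (-1)) = Cminus (Cmult 4 a) 1.
Proof. unfold quad_map. apply injective_projections; cbn; ring. Qed.

Lemma iterate_fixpoint (f : C -> C) (z : C) (n : nat) : f z = z -> iterate f n z = z.
Proof.
  intro Hz. induction n as [|n IH]; [reflexivity|].
  unfold iterate in *. rewrite Nat.iter_succ, IH. exact Hz.
Qed.

Lemma quad_ELF_interior (p q : R) : p^2 + q^2 < p/2 ->
  ELF_at (quad_map (p, q)) (RtoC 1) (RtoC 1).
Proof.
  intro Ha. assert (Hle : p^2 + q^2 <= p/2) by lra.
  apply (ELF_at_one _ 3).
  - split; [apply holomorphic_quad | intros z Hz; apply quad_selfmap; assumption].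
  - apply quad_tangent_subdisk; exact Ha.
  - lra.
  - apply quad_lipschitz; exact Hle.
  - apply quad_one.
  - intros w Hw E. apply (quad_preimage_one p q w Hle); [|exact Hw | exact E].
    intro E'. injection E' as E1 E2. subst. lra.
  - apply third_deriv_quad.
Qed.

(** Part (ii), first half: [phi(1) = 1] and [phi(-1) = 4a - 1] are two
    distinct points of the unit circle. *)
Lemma quad_not_ELF_circle (p q : R) : p^2 + q^2 = p/2 -> (p, q) <> RtoC (1/2) ->
  ~ essentially_linear_fractional (quad_map (p, q)).
Proof.
  intros Ha Hne Helf. assert (Hle : p^2 + q^2 <= p/2) by lra.
  assert (Hlip : forall g, Cmod g = 1 -> lip_at (quad_map (p, q)) g 3)
    by (intros g Hg; apply lip_at_of_lipschitz; [apply quad_lipschitz; exact Hle | lra]).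
  assert (E : quad_map (p, q) (RtoC 1) = quad_map (p, q) (RtoC (-1))).
  { apply (ELF_boundary_values_equal _ _ _ 3 3 Cmod_one Cmod_mone).
    - rewrite quad_one. exact Cmod_one.
    - rewrite quad_minus_one. apply Cmod_eq_sqmod; [lra|].
      unfold sqmod, Cminus, Cplus, Copp, Cmult, RtoC; cbn. nra.
    - lra.
    - lra.
    - apply Hlip, Cmod_one.
    - apply Hlip, Cmod_mone.
    - exact Helf. }
  rewrite quad_one, quad_minus_one in E. apply Hne.
  unfold Cminus, Cplus, Copp, Cmult, RtoC in E; cbn in E. injection E as E1 E2.
  apply injective_projections; cbn; lra.
Qed.

Lemma quad2_ELF_circle (p q : R) : p^2 + q^2 = p/2 -> 0 < q^2 ->
  essentially_linear_fractional (fun z => quad_map (p, q) (quad_map (p, q) z)).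
Proof.
  intros Ha Hq. assert (Hle : p^2 + q^2 <= p/2) by lra.
  assert (Hne : (p, q) <> RtoC (1/2)) by (intro E; injection E as E1 E2; subst; lra).
  pose proof (quad_maps_closed_disk p q Hle) as Hcl.
  exists (RtoC 1), (RtoC 1). apply (ELF_at_one _ (3 ^ 2)).
  - split; [apply holomorphic_quad2 | intros z Hz; apply quad_selfmap, quad_selfmap; assumption].
  - apply quad2_tangent_subdisk; assumption.
  - lra.
  - exact (iterate_lipschitz _ 3 2 ltac:(lra) Hcl (quad_lipschitz p q Hle)).
  - rewrite !quad_one. reflexivity.
  - intros w Hw E.
    apply (quad_preimage_one p q w Hle Hne Hw), (quad_preimage_one p q _ Hle Hne); [|exact E].
    apply Hcl, Hw.
  - apply third_deriv_quad2.
Qed.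

(** Part (iii): for [a = 1/2], every iterate sends both [1] and [-1] to [1]. *)
Lemma quad_half_iterates_not_ELF (n : nat) : (1 <= n)%nat ->
  ~ essentially_linear_fractional (iterate (quad_map (RtoC (1/2))) n).
Proof.
  intros Hn Helf. set (phi := quad_map (RtoC (1/2))).
  assert (Ha : (1/2)^2 + 0^2 <= (1/2)/2) by lra.
  assert (Hfix : iterate phi n (RtoC 1) = 1) by (apply iterate_fixpoint, quad_one).
  assert (Hm : iterate phi n (RtoC (-1)) = 1).
  { destruct n as [|k]; [lia|]. unfold iterate. rewrite Nat.iter_succ_r.
    replace (phi (RtoC (-1))) with (RtoC 1); [apply iterate_fixpoint, quad_one|].
    unfold phi. rewrite quad_minus_one.
    unfold Cminus, Cplus, Copp, Cmult, RtoC. apply injective_projections; cbn; field. }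
  assert (Hlip : forall g, Cmod g = 1 -> lip_at (iterate phi n) g (3 ^ n)).
  { intros g Hg. apply lip_at_of_lipschitz; [|lra].
    apply iterate_lipschitz; [lra | apply quad_maps_closed_disk | apply quad_lipschitz]; exact Ha. }
  assert (E : RtoC 1 = RtoC (-1)).
  { apply (ELF_boundary_injective (iterate phi n) _ _ (3 ^ n) (3 ^ n) Cmod_one Cmod_mone).
    - rewrite Hfix. exact Cmod_one.
    - rewrite Hfix, Hm. reflexivity.
    - apply pow_le; lra.
    - apply pow_le; lra.
    - apply Hlip, Cmod_one.
    - apply Hlip, Cmod_mone.
    - exact Helf. }
  injection E. lra.
Qed.

Theorem mainTheorem5 (a : C) :
  Cmod (Cminus a (RtoC (1/4))) <= 1/4 -> a <> RtoC 0 ->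
  (Cmod (Cminus a (RtoC (1/4))) < 1/4 ->
     ELF_at (quad_map a) (RtoC 1) (RtoC 1)) /\
  (Cmod (Cminus a (RtoC (1/4))) = 1/4 -> a <> RtoC (1/2) ->
     ~ essentially_linear_fractional (quad_map a) /\
     essentially_linear_fractional (fun z => quad_map a (quad_map a z))) /\
  (a = RtoC (1/2) ->
     forall n : nat, (1 <= n)%nat ->
       ~ essentially_linear_fractional (iterate (quad_map a) n)).
Proof.
  intros _ Hn0. destruct a as [p q]. split; [|split].
  - intro Hlt. apply quad_ELF_interior, quarter_disk_lt, Hlt.
  - intros Heq Hne. pose proof (quarter_disk_eq p q Heq) as Ha.
    (* On the circle, [q = 0] only for [a = 0] and [a = 1/2]. *)
    assert (Hq : 0 < q^2).
    { destruct (Rle_or_lt (q^2) 0) as [H | H]; [exfalso | exact H].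
      assert (q = 0) by nra. subst q.
      assert (p * (p - 1/2) = 0) as Hp by nra.
      apply Rmult_integral in Hp as [Hp | Hp];
        [apply Hn0 | apply Hne]; apply injective_projections; cbn; lra. }
    split; [apply quad_not_ELF_circle | apply quad2_ELF_circle]; assumption.
  - intros E n Hn. rewrite E. apply quad_half_iterates_not_ELF, Hn.
Qed.
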